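(* Let $\Gamma$ be a connected graph. Then $\Gamma$ admits a transitive translation-like action by $\mathbb{Z}$ if and only if $\Gamma$ is bilipschitz equivalent to a graph admitting a bi-infinite Hamiltonian path.
   Context: A connected graph is regarded as a metric space on its vertex set via the path-length metric (distance between two vertices is the minimal length of a path joining them). For a group $H$ and a metric space $(X,d)$, a right action $*$ of $H$ on $X$ is translation-like if (i) it is free ($x*h=x$ implies $h=1_H$) and (ii) for every $h\in H$ the set $\{d(x,x*h) : x\in X\}$ is bounded. Two graphs are bilipschitz equivalent if there is a bijection $f$ between their vertex sets and a constant $c>0$ with $\frac1c d(x,y)\le \rho(f(x),f(y))\le c\,d(x,y)$ for all vertices $x,y$, where $d,\rho$ are the path-length metrics. A bi-infinite Hamiltonian path in a graph is a map $P:\mathbb{Z}\to V(\Gamma)$ that is a bijection onto the vertex set and such that $P(i)$ and $P(i+1)$ are adjacent for all $i$. *)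

From Stdlib Require Import Reals ZArith Arith ClassicalEpsilon.

Definition is_graph {V : Type} (adj : V -> V -> Prop) : Prop :=
  (forall x y, adj x y -> adj y x) /\ (forall x, ~ adj x x).

Inductive walk {V : Type} (adj : V -> V -> Prop) : V -> V -> nat -> Prop :=
  | walk0 : forall x, walk adj x x 0
  | walkS : forall x y z n, adj x y -> walk adj y z n -> walk adj x z (S n).

Definition connected {V : Type} (adj : V -> V -> Prop) : Prop :=
  inhabited V /\ forall x y : V, exists n, walk adj x y n.

(* Path-length metric: the minimal length of a path from x to y
   (well-defined whenever such a path exists, i.e. in connected graphs). *)
Definition gdist {V : Type} (adj : V -> V -> Prop) (x y : V) : nat :=
  epsilon (inhabits 0%nat)
    (fun n => walk adj x y n /\ forall m, walk adj x y m -> (n <= m)%nat).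

Definition Z_right_action {V : Type} (act : V -> Z -> V) : Prop :=
  (forall x, act x 0%Z = x) /\
  (forall x a b, act (act x a) b = act x (a + b)%Z).

Definition translation_like {V : Type} (adj : V -> V -> Prop)
    (act : V -> Z -> V) : Prop :=
  Z_right_action act /\
  (forall x h, act x h = x -> h = 0%Z) /\
  (forall h, exists B : nat, forall x, (gdist adj x (act x h) <= B)%nat).

Definition transitive_action {V : Type} (act : V -> Z -> V) : Prop :=
  forall x y : V, exists h, act x h = y.

Definition bilipschitz_equiv {V W : Type} (adjV : V -> V -> Prop)
    (adjW : W -> W -> Prop) : Prop :=
  exists (f : V -> W) (c : R),
    (forall x y, f x = f y -> x = y) /\ (forall w, exists x, f x = w) /\
    (0 < c)%R /\
    forall x y,
      (INR (gdist adjV x y) / c <= INR (gdist adjW (f x) (f y)))%R /\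
      (INR (gdist adjW (f x) (f y)) <= c * INR (gdist adjV x y))%R.

Definition biinf_hamiltonian_path {W : Type} (adj : W -> W -> Prop)
    (P : Z -> W) : Prop :=
  (forall i j, P i = P j -> i = j) /\ (forall w, exists i, P i = w) /\
  (forall i, adj (P i) (P (i + 1)%Z)).

(* A transitive translation-like action of Z on Γ moves every vertex a bounded
   distance along the orbit of a base point x0, so adding the edges {x, x*1}
   to Γ produces a graph bilipschitz equivalent to Γ (via the identity) in
   which i |-> x0*i is a bi-infinite Hamiltonian path.  Conversely, a
   bi-infinite Hamiltonian path P gives the action P(i) * h = P(i+h), which
   moves each vertex by at most |h|, and a bilipschitz bijection transports a
   transitive translation-like action back to Γ. *)
From Stdlib Require Import Reals ZArith Lia Lra Classical ClassicalEpsilon.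

Lemma nat_minimal_witness (Q : nat -> Prop) :
  (exists n, Q n) -> exists n, Q n /\ forall m, Q m -> (n <= m)%nat.
Proof.
  intros [n Qn]. induction n as [n IH] using (well_founded_induction lt_wf).
  destruct (classic (exists m, (m < n)%nat /\ Q m)) as [[m [Hmn Qm]] | Hno].
  - exact (IH m Hmn Qm).
  - exists n. split; [exact Qn |].
    intros m Qm. destruct (le_lt_dec n m) as [Hle | Hlt]; [exact Hle |].
    exfalso. apply Hno. eauto.
Qed.

Lemma nat_bounded_of_INR_bounded (r : R) :
  exists B : nat, forall n : nat, (INR n <= r)%R -> (n <= B)%nat.
Proof.
  exists (Z.to_nat (up r)). intros n Hn.
  destruct (archimed r) as [Hup _].
  assert (Hlt : (Z.of_nat n < up r)%Z).
  { apply lt_IZR. rewrite <- INR_IZR_INZ. lra. }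
  lia.
Qed.

Lemma INR_div_le (a b c : nat) :
  (0 < c)%nat -> (a <= c * b)%nat -> (INR a / INR c <= INR b)%R.
Proof.
  intros Hc Hab. apply le_INR in Hab. rewrite mult_INR in Hab.
  assert (Hc' : (0 < INR c)%R) by (apply lt_0_INR; exact Hc).
  apply (Rmult_le_reg_r (INR c)); [exact Hc' |].
  replace (INR a / INR c * INR c)%R with (INR a) by (field; lra). lra.
Qed.

Section Walks.

Variables (V : Type) (adj : V -> V -> Prop).

Lemma walk_app x y z n m :
  walk adj x y n -> walk adj y z m -> walk adj x z (n + m).
Proof. induction 1; intros; simpl; [assumption | econstructor; eauto]. Qed.

Lemma walk_rev :
  (forall x y, adj x y -> adj y x) ->
  forall x y n, walk adj x y n -> walk adj y x n.
Proof.
  intros Hsym. induction 1 as [x | x y z n Hxy _ IH]; [constructor |].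
  rewrite <- Nat.add_1_r. eapply walk_app; [exact IH |].
  econstructor; [apply Hsym; exact Hxy | constructor].
Qed.

Lemma walk_incl (adj' : V -> V -> Prop) :
  (forall x y, adj x y -> adj' x y) ->
  forall x y n, walk adj x y n -> walk adj' x y n.
Proof. induction 2; econstructor; eauto. Qed.

Lemma gdist_spec x y n :
  walk adj x y n ->
  walk adj x y (gdist adj x y) /\
  forall m, walk adj x y m -> (gdist adj x y <= m)%nat.
Proof.
  intros Hw. unfold gdist. apply epsilon_spec, nat_minimal_witness. eauto.
Qed.

Lemma gdist_walk x y : connected adj -> walk adj x y (gdist adj x y).
Proof.
  intros [_ Hconn]. destruct (Hconn x y) as [n Hw].
  exact (proj1 (gdist_spec x y n Hw)).
Qed.

Lemma gdist_le_walk x y n : walk adj x y n -> (gdist adj x y <= n)%nat.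
Proof. intros Hw. exact (proj2 (gdist_spec x y n Hw) n Hw). Qed.

End Walks.

Arguments walk_app {V adj x y z n m}.
Arguments walk_rev {V adj}.
Arguments gdist_spec {V adj x y n}.
Arguments walk_incl {V adj adj'}.
Arguments gdist_walk {V adj}.
Arguments gdist_le_walk {V adj x y n}.

Lemma walk_subdivide {V : Type} (a b : V -> V -> Prop) (K : nat) :
  (forall x y, b x y -> exists k, (k <= K)%nat /\ walk a x y k) ->
  forall x y n, walk b x y n -> exists k, (k <= K * n)%nat /\ walk a x y k.
Proof.
  intros Hedge. induction 1 as [x | x y z n Hxy _ IH].
  - exists 0%nat. split; [lia | constructor].
  - destruct (Hedge x y Hxy) as [k1 [Hk1 Hw1]].
    destruct IH as [k2 [Hk2 Hw2]].
    exists (k1 + k2)%nat. split; [nia | exact (walk_app Hw1 Hw2)].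
Qed.

Lemma bilipschitz_equiv_supergraph {V : Type} (a b : V -> V -> Prop) (K : nat) :
  (0 < K)%nat -> connected a ->
  (forall x y, a x y -> b x y) ->
  (forall x y, b x y -> exists k, (k <= K)%nat /\ walk a x y k) ->
  bilipschitz_equiv a b.
Proof.
  intros HK Hconn Hab Hedge.
  exists (fun x => x), (INR K).
  split; [auto | split; [eauto | split; [apply lt_0_INR; exact HK |]]].
  intros x y.
  pose proof (gdist_walk x y Hconn) as Hwa.
  pose proof (walk_incl Hab _ _ _ Hwa) as Hwb.
  assert (Hba : (gdist b x y <= gdist a x y)%nat) by exact (gdist_le_walk Hwb).
  destruct (walk_subdivide a b K Hedge x y (gdist b x y)
              (proj1 (gdist_spec Hwb))) as [k [Hk Hwk]].
  assert (Hab' : (gdist a x y <= K * gdist b x y)%nat)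
    by (pose proof (gdist_le_walk Hwk); lia).
  split.
  - exact (INR_div_le _ _ _ HK Hab').
  - rewrite <- mult_INR. apply le_INR. nia.
Qed.

Lemma surjective_section {A B : Type} (f : A -> B) :
  (forall w, exists x, f x = w) -> exists g : B -> A, forall w, f (g w) = w.
Proof. intros Hsurj. exact (choice (fun w x => f x = w) Hsurj). Qed.

Section OrbitPath.

Variables (V : Type) (adj : V -> V -> Prop) (act : V -> Z -> V).
Hypothesis act_action : Z_right_action act.
Hypothesis act_free : forall x h, act x h = x -> h = 0%Z.

Lemma orbit_injective x0 : forall i j, act x0 i = act x0 j -> i = j.
Proof.
  destruct act_action as [_ Hcomp].
  intros i j Hij.
  assert (Hfix : act (act x0 i) (j - i)%Z = act x0 i).
  { rewrite Hcomp. replace (i + (j - i))%Z with j by lia. symmetry; exact Hij. }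
  apply act_free in Hfix. lia.
Qed.

(* Loops are excluded so that the result is again a simple graph. *)
Definition act_augmented (x y : V) : Prop :=
  x <> y /\ (adj x y \/ y = act x 1%Z \/ x = act y 1%Z).

Lemma act_augmented_graph : is_graph adj -> is_graph act_augmented.
Proof.
  intros [Hsym Hirr]. split.
  - intros x y [Hne H]. split; [auto |]. destruct H as [H | [H | H]]; auto.
  - intros x [Hne _]. exact (Hne eq_refl).
Qed.

Lemma act_augmented_incl : is_graph adj -> forall x y, adj x y -> act_augmented x y.
Proof.
  intros [_ Hirr] x y Hxy. split; [intros ->; exact (Hirr y Hxy) | auto].
Qed.

Lemma act_augmented_edge_walk (B : nat) :
  is_graph adj -> connected adj ->
  (forall x, (gdist adj x (act x 1%Z) <= B)%nat) ->
  forall x y, act_augmented x y -> exists k, (k <= S B)%nat /\ walk adj x y k.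
Proof.
  intros [Hsym _] Hconn HB x y [_ [Hxy | [-> | ->]]].
  - exists 1%nat. split; [lia | econstructor; [exact Hxy | constructor]].
  - exists (gdist adj x (act x 1%Z)).
    split; [specialize (HB x); lia | exact (gdist_walk _ _ Hconn)].
  - exists (gdist adj y (act y 1%Z)).
    split; [specialize (HB y); lia |].
    exact (walk_rev Hsym _ _ _ (gdist_walk _ _ Hconn)).
Qed.

Lemma orbit_hamiltonian_path x0 :
  transitive_action act ->
  biinf_hamiltonian_path act_augmented (fun i => act x0 i).
Proof.
  intros Htrans. destruct act_action as [_ Hcomp].
  split; [exact (orbit_injective x0) | split; [exact (Htrans x0) |]].
  intros i. rewrite <- Hcomp. split; [| auto].
  rewrite Hcomp. intros Heq. apply orbit_injective in Heq. lia.
Qed.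

End OrbitPath.

Lemma path_walk {W : Type} (adjW : W -> W -> Prop) (P : Z -> W) :
  (forall x y, adjW x y -> adjW y x) ->
  (forall i, adjW (P i) (P (i + 1)%Z)) ->
  forall i j, walk adjW (P i) (P j) (Z.abs_nat (j - i)).
Proof.
  intros Hsym Padj.
  assert (Hright : forall n i, walk adjW (P i) (P (i + Z.of_nat n)%Z) n).
  { induction n as [| n IH]; intros i.
    - rewrite Z.add_0_r. constructor.
    - econstructor; [apply Padj |].
      replace (i + Z.of_nat (S n))%Z with (i + 1 + Z.of_nat n)%Z by lia.
      apply IH. }
  intros i j. destruct (Z_le_gt_dec i j) as [Hij | Hij].
  - pose proof (Hright (Z.abs_nat (j - i)) i) as Hw.
    replace (i + Z.of_nat (Z.abs_nat (j - i)))%Z with j in Hw by lia. exact Hw.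
  - apply (walk_rev Hsym).
    pose proof (Hright (Z.abs_nat (j - i)) j) as Hw.
    replace (j + Z.of_nat (Z.abs_nat (j - i)))%Z with i in Hw by lia. exact Hw.
Qed.

Lemma hamiltonian_path_action {W : Type} (adjW : W -> W -> Prop) (P : Z -> W) :
  is_graph adjW -> biinf_hamiltonian_path adjW P ->
  exists act, translation_like adjW act /\ transitive_action act.
Proof.
  intros [Hsym _] [Pinj [Psurj Padj]].
  destruct (surjective_section P Psurj) as [Q PQ].
  assert (QP : forall i, Q (P i) = i) by (intros i; apply Pinj, PQ).
  exists (fun w h => P (Q w + h)%Z).
  split; [split; [split | split] |].
  - intros w. rewrite Z.add_0_r. apply PQ.
  - intros w a b. rewrite QP. f_equal. lia.
  - intros w h Hfix. rewrite <- (PQ w) in Hfix at 2. apply Pinj in Hfix. lia.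
  - intros h. exists (Z.abs_nat h). intros w.
    rewrite <- (PQ w) at 1.
    replace h with (Q w + h - Q w)%Z at 2 by lia.
    exact (gdist_le_walk (path_walk adjW P Hsym Padj _ _)).
  - intros x y. exists (Q y - Q x)%Z.
    replace (Q x + (Q y - Q x))%Z with (Q y) by lia. apply PQ.
Qed.

Lemma bilipschitz_transport_action {V W : Type}
    (adj : V -> V -> Prop) (adjW : W -> W -> Prop) :
  bilipschitz_equiv adj adjW ->
  (exists actW, translation_like adjW actW /\ transitive_action actW) ->
  exists act, translation_like adj act /\ transitive_action act.
Proof.
  intros [f [c [finj [fsurj [cpos Hlip]]]]]
         [actW [[[Hid Hcomp] [Hfree Hbd]] Htrans]].
  destruct (surjective_section f fsurj) as [g fg].
  assert (gf : forall x, g (f x) = x) by (intros x; apply finj, fg).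
  exists (fun x h => g (actW (f x) h)).
  split; [split; [split | split] |].
  - intros x. rewrite Hid. apply gf.
  - intros x a b. rewrite fg, Hcomp. reflexivity.
  - intros x h Hfix. apply (Hfree (f x)).
    rewrite <- (fg (actW (f x) h)), Hfix. reflexivity.
  - intros h. destruct (Hbd h) as [BW HBW].
    destruct (nat_bounded_of_INR_bounded (c * INR BW)) as [B HB].
    exists B. intros x. apply HB.
    destruct (Hlip x (g (actW (f x) h))) as [Hlow _].
    rewrite fg in Hlow.
    pose proof (le_INR _ _ (HBW (f x))) as HBWx.
    set (d := INR (gdist adj x (g (actW (f x) h)))) in *.
    replace d with (c * (d / c))%R by (field; lra).
    apply Rmult_le_compat_l; lra.
  - intros x y. destruct (Htrans (f x) (f y)) as [h Hh].
    exists h. rewrite Hh. apply gf.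
Qed.

Theorem lemma3p1 (V : Type) (adj : V -> V -> Prop) :
  is_graph adj -> connected adj ->
  ((exists act : V -> Z -> V, translation_like adj act /\ transitive_action act)
   <->
   (exists (W : Type) (adjW : W -> W -> Prop),
      is_graph adjW /\ bilipschitz_equiv adj adjW /\
      exists P : Z -> W, biinf_hamiltonian_path adjW P)).
Proof.
  intros Hgraph Hconn. split.
  - intros [act [[Haction [Hfree Hbd]] Htrans]].
    pose proof Hconn as [[x0] _].
    destruct (Hbd 1%Z) as [B HB].
    exists V, (act_augmented V adj act).
    split; [exact (act_augmented_graph V adj act Hgraph) | split].
    + apply (bilipschitz_equiv_supergraph _ _ (S B)); [lia | exact Hconn | |].
      * exact (act_augmented_incl V adj act Hgraph).
      * exact (act_augmented_edge_walk V adj act B Hgraph Hconn HB).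
    + exists (fun i => act x0 i).
      exact (orbit_hamiltonian_path V adj act Haction Hfree x0 Htrans).
  - intros [W [adjW [HgraphW [Hlip [P HP]]]]].
    exact (bilipschitz_transport_action adj adjW Hlip
             (hamiltonian_path_action adjW P HgraphW HP)).
Qed.
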